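(* Let $c,n\in\mathbb N$ with $c\ge2$, $n\ge2$, and let $s\in(0,1/2]$. For any real $\gamma\ge 2-(n-1)(2s-1)$, \[\sum_{\substack{(a_1,\ldots,a_n)\in\mathbb N^n\\ c\le a_1<a_2<\cdots<a_n}}\frac{1}{(a_1\cdots a_{n-1})^{2s}a_n^{\gamma}}\le\frac{1}{(c-1)^{\gamma+n(2s-1)-2s}}.\] *)

From HB Require Import structures.
From mathcomp Require Import all_boot all_order all_algebra.
From mathcomp Require Import all_classical all_reals all_analysis.
Set Implicit Arguments. Unset Strict Implicit. Unset Printing Implicit Defensive.
Import Order.TTheory GRing.Theory Num.Theory.
Local Open Scope ring_scope.

Definition admissible (c : nat) (a : seq nat) : bool :=
  all (fun x => (c <= x)%N) a && sorted ltn a.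

(* 1 / ((a_1 ... a_{n-1})^{2s} * a_n^gamma), with a_i = nth 0 a (i-1) *)
Definition summand (R : realType) (n : nat) (s gamma : R) (a : seq nat) : R :=
  (((\prod_(i < n.-1) (nth 0%N a i)%:R) `^ (2 * s)) *
   ((nth 0%N a n.-1)%:R `^ gamma))^-1.

(** Let [S_k(b)] be the sum of [1 / ((a_1 ... a_k)^(2s) a_(k+1)^gamma)] over
    [b < a_1 < ... < a_(k+1)], and [e_k = gamma + k (2s - 1) - 1].  Then
    [S_k(b) <= b^(-e_k)] by induction on [k]: grouping by the first entry
    [x > b] and bounding the tails by [x^(-e_k)] gives
    [S_(k+1)(b) <= sum_(x > b) x^(-(e_(k+1) + 1))], and for [e >= 1] the sum
    [sum_(x > b) x^(-(e + 1)) <= b^(-e)] telescopes, because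
    [(y+1)^(-(e+1)) + (y+1)^(-e) <= y^(-e)].  Since [s <= 1/2], [e_k] decreases
    with [k], so the hypothesis on [gamma], which says [e_(n-1) >= 1], keeps
    every [e_k >= 1].  The theorem is the case [b = c - 1]. *)

From HB Require Import structures.
From mathcomp Require Import all_boot all_order all_algebra.
From mathcomp Require Import all_classical all_reals all_analysis.
From mathcomp Require Import finmap ring lra.
Import Order.TTheory GRing.Theory Num.Theory.
Local Open Scope classical_set_scope.
Local Open Scope ring_scope.

Section PowRTail.
Variable R : realType.

Lemma inv_powR_telescope (y e : R) : 0 < y -> 1 <= e ->
  ((y + 1) `^ (e + 1))^-1 + ((y + 1) `^ e)^-1 <= (y `^ e)^-1.
Proof.
move=> y_gt0 e_ge1; set a := y + 1.
have a_gt0 : 0 < a by rewrite /a; lra.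
set u := a `^ e; set v := y `^ e.
have u_gt0 : 0 < u by rewrite powR_gt0.
have v_gt0 : 0 < v by rewrite powR_gt0.
have uE : u = v * (a / y) `^ e.
  by rewrite -powRM ?divr_ge0 ?ltW // mulrC divfK ?gt_eqF.
have ratio_le : a / y <= (a / y) `^ e.
  by apply: le1r_powR => //; rewrite ler_pdivlMr // mul1r /a; lra.
have va_le_uy : v * a <= u * y.
  by rewrite uE -mulrA ler_pM2l // -ler_pdivrMr.
have -> : a `^ (e + 1) = u * a.
  by rewrite powRD ?powRr1 ?(gt_eqF a_gt0) ?implybT ?(ltW a_gt0).
have -> : (u * a)^-1 + u^-1 = (1 + a) / (u * a) by field; rewrite ?gt_eqF.
rewrite ler_pdivrMr ?mulr_gt0 // mulrC ler_pdivlMr //.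
rewrite /a in va_le_uy *; nra.
Qed.

Lemma sum_iota_inv_powR_le (e : R) (b M : nat) : (0 < b)%N -> 1 <= e ->
  \sum_(x <- iota b.+1 M) ((x%:R : R) `^ (e + 1))^-1 <= ((b%:R : R) `^ e)^-1.
Proof.
move=> + e_ge1; elim: M b => [|M IH] b b_gt0.
  by rewrite big_nil invr_ge0 powR_ge0.
rewrite /= big_cons.
apply: le_trans (lerD (lexx _) (IH b.+1 _)) _ => //.
by rewrite -natr1 inv_powR_telescope // ltr0n.
Qed.

Lemma sum_group_by_key_le (T : eqType) (key : T -> nat) (F : T -> R)
    (X : seq T) (b : nat) (e : R) :
  (0 < b)%N -> 1 <= e -> {in X, forall t, (b < key t)%N} ->
  (forall x, (b < x)%N ->
     \sum_(t <- X | key t == x) F t <= ((x%:R : R) `^ (e + 1))^-1) ->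
  \sum_(t <- X) F t <= ((b%:R : R) `^ e)^-1.
Proof.
move=> b_gt0 e_ge1 X_key group_le.
set M := (\max_(t <- X) key t)%N.
have -> : \sum_(t <- X) F t =
    \sum_(t <- X) \sum_(x <- iota b.+1 M | x == key t) F t.
  rewrite big_seq [RHS]big_seq; apply: eq_bigr => t tX.
  rewrite -big_filter filter_pred1_uniq ?iota_uniq ?big_seq1 //.
  rewrite mem_iota X_key //= addSn ltnS (leq_trans _ (leq_addl _ _)) //.
  exact: (@leq_bigmax_seq _ X xpredT key).
rewrite (exchange_big_dep xpredT) //=.
apply: le_trans (sum_iota_inv_powR_le _ _ M b_gt0 e_ge1).
rewrite big_seq [leRHS]big_seq; apply: ler_sum => x.
rewrite mem_iota => /andP[bx _].
by under eq_bigl do rewrite eq_sym; exact: group_le.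
Qed.

End PowRTail.

Lemma admissible_cons (c x : nat) (l : seq nat) :
  admissible c (x :: l) = (c <= x)%N && admissible x.+1 l.
Proof.
rewrite /admissible /= (path_sortedE ltn_trans).
case: (leqP c x) => //= cx; rewrite andbA; congr (_ && _).
apply/idP/idP => [/andP[_ //] | x_lt].
by rewrite x_lt andbT; apply: sub_all x_lt => y /ltnW /(leq_trans cx).
Qed.

Section Weight.
Variables (R : realType) (s g : R).

Definition weight (l : seq nat) : R := summand (size l) s g l.

Lemma weight_singleton (x : nat) : weight [:: x] = ((x%:R : R) `^ g)^-1.
Proof. by rewrite /weight /summand /= big_ord0 powR1 mul1r. Qed.

Lemma weight_cons (x : nat) (l : seq nat) : l != [::] ->
  weight (x :: l) = ((x%:R : R) `^ (2 * s))^-1 * weight l.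
Proof.
case: l => [//|y l] _; rewrite /weight /summand /= big_ord_recl /=.
by rewrite powRM ?ler0n ?prodr_ge0 // -mulrA invfM.
Qed.

Lemma sum_weight_head_singleton (X : seq (seq nat)) (x : nat) :
  uniq X -> {in X, forall l, size l = 1%N} ->
  \sum_(l <- X | head 0%N l == x) weight l <= ((x%:R : R) `^ g)^-1.
Proof.
move=> X_uniq X_size; rewrite -big_filter.
set Y := [seq _ <- X | _].
have Y_sub : {subset Y <= [:: [:: x]]}.
  move=> l; rewrite mem_filter => /andP[/eqP <- /X_size].
  by case: l => [|y [|z l]] //= _; rewrite inE.
have Y_size : (size Y <= 1)%N := uniq_leq_size (filter_uniq _ X_uniq) Y_sub.
clearbody Y; case: Y Y_sub Y_size => [|t [|//]] Y_sub _.
  by rewrite big_nil invr_ge0 powR_ge0.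
have /[!inE] /eqP -> := Y_sub t (mem_head _ _).
by rewrite big_seq1 weight_singleton.
Qed.

Lemma sum_weight_head_cons (X : seq (seq nat)) (x : nat) :
  {in X, forall l, (2 <= size l)%N} ->
  \sum_(l <- X | head 0%N l == x) weight l =
  ((x%:R : R) `^ (2 * s))^-1 *
    \sum_(l <- [seq behead l | l <- X & head 0%N l == x]) weight l.
Proof.
move=> X_size; rewrite big_map big_filter mulr_sumr big_seq_cond [RHS]big_seq_cond.
apply: eq_bigr => -[|y [|z l]] /andP[/X_size //= _ /eqP ->].
by rewrite weight_cons.
Qed.

Lemma sum_weight_admissible_le (k b : nat) (X : seq (seq nat)) :
  s <= 1 / 2 -> (0 < b)%N -> 2 - k%:R * (2 * s - 1) <= g -> uniq X ->
  {in X, forall l, size l = k.+1 /\ admissible b.+1 l} ->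
  \sum_(l <- X) weight l <= ((b%:R : R) `^ (g + k%:R * (2 * s - 1) - 1))^-1.
Proof.
move=> s_le_half; elim: k b X => [|k IH] b X b_gt0 g_ge X_uniq X_adm.
all: have X_head : {in X, forall l, (b < head 0%N l)%N}
       by move=> -[|x l] /X_adm[//= _]; rewrite admissible_cons => /andP[].
all: apply: (@sum_group_by_key_le _ _ (head 0%N)) => //; first lra.
  move=> x _; rewrite mulr0n mul0r addr0 subrK.
  by apply: sum_weight_head_singleton => // l /X_adm[].
move=> x bx; rewrite sum_weight_head_cons; last by move=> l /X_adm[->].
have X_cons : {in X, forall l, l = head 0%N l :: behead l}.
  by move=> [|y l] /X_adm[].
set Y := [seq behead l | l <- X & head 0%N l == x].
have Y_uniq : uniq Y.
  rewrite map_inj_in_uniq ?filter_uniq // => l1 l2.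
  rewrite !mem_filter => /andP[/eqP l1x /X_cons l1E] /andP[/eqP l2x /X_cons l2E].
  by rewrite l1E l2E l1x l2x /= => ->.
have Y_adm : {in Y, forall l, size l = k.+1 /\ admissible x.+1 l}.
  move=> _ /mapP[l + ->]; rewrite mem_filter => /andP[/eqP lx lX].
  have [l_size] := X_adm l lX; rewrite (X_cons l lX) lx admissible_cons.
  by case/andP=> _ ?; rewrite /= size_behead l_size.
have x_gt0 : (0 < x)%N by apply: ltn_trans bx.
have g_ge_k : 2 - k%:R * (2 * s - 1) <= g.
  by rewrite -[k.+1%:R]natr1 mulrDl mul1r in g_ge; lra.
apply: le_trans (ler_wpM2l _ (IH x Y x_gt0 g_ge_k Y_uniq Y_adm)) _.
  by rewrite invr_ge0 powR_ge0.
rewrite -invfM -powRD; last by rewrite pnatr_eq0 -lt0n x_gt0 implybT.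
suff -> : 2 * s + (g + k%:R * (2 * s - 1) - 1) =
          g + k.+1%:R * (2 * s - 1) - 1 + 1 by [].
by rewrite -[k.+1%:R]natr1; ring.
Qed.

End Weight.

Theorem lemma2p3 (R : realType) (c n : nat) (s gamma : R) :
  (2 <= c)%N -> (2 <= n)%N -> 0 < s -> s <= 1 / 2 ->
  2 - (n%:R - 1) * (2 * s - 1) <= gamma ->
  (\esum_(a in [set a : n.-tuple nat | admissible c a])
      (summand n s gamma a)%:E
   <= (((c%:R - 1) `^ (gamma + n%:R * (2 * s - 1) - 2 * s))^-1)%:E)%E.
Proof.
case: c => [//|b] b_gt0; case: n => [//|k] _ _ s_le gamma_ge.
apply: ge_ereal_sup => _ [X [X_fin X_adm]] <-.
rewrite fsbig_finite // sumEFin lee_fin.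
have -> : \sum_(t <- fset_set X) summand k.+1 s gamma t =
    \sum_(l <- [seq val t | t <- fset_set X]) weight R s gamma l.
  by rewrite big_map; apply: eq_bigr => t _; rewrite /weight size_tuple.
rewrite -[b.+1%:R]natr1 addrK -[k.+1%:R]natr1.
rewrite -[k.+1%:R]natr1 addrK in gamma_ge.
have -> : gamma + (k%:R + 1) * (2 * s - 1) - 2 * s =
          gamma + k%:R * (2 * s - 1) - 1 by ring.
apply: sum_weight_admissible_le => //.
- by rewrite map_inj_uniq ?fset_uniq //; exact: val_inj.
- move=> _ /mapP[t tX ->]; rewrite size_tuple; split => //.
  by apply: X_adm; apply/set_mem; rewrite -(in_fset_set X_fin).
Qed.
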